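(* Let $T\in\mathcal{L}(\mathcal{H})$ have closed range and let $n\ge1$. The following are equivalent: (1) $T$ is $n$-hypo-EP; (2) $T^n=T^\dagger T^{n+1}$; (3) $T^nT^\dagger=T^\dagger T^{n+1}T^\dagger$; (4) $(T^* )^n=(T^* )^nT^\dagger T$; (5) there is $c\ge0$ with $\|(T^* )^nx\|\le c\|Tx\|$ for all $x\in\mathcal{H}$; (6) there is $c\ge0$ with $\|(T^* )^nx\|\le c\|\omega(T)x\|$ for all $x\in\mathcal{H}$.
   Context: $\mathcal{H}$ is a Hilbert space, $\mathcal{L}(\mathcal{H})$ the bounded operators on it; $R(\cdot)$ denotes range. For $T$ with closed range, $T^\dagger$ is its Moore–Penrose inverse (unique solution of $TT^\dagger T=T$, $T^\dagger TT^\dagger=T^\dagger$, $(T^\dagger T)^*=T^\dagger T$, $(TT^\dagger)^*=TT^\dagger$), and $\omega(T)=T(T^*T)^\dagger=(T^\dagger)^*$ is its Cauchy dual. For $n\ge1$, $T$ is $n$-hypo-EP if $T$ has closed range and $R(T^n)\subset R(T^* )$. *)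

From HB Require Import structures.
From mathcomp Require Import all_boot all_order all_algebra.
From mathcomp Require Import all_classical all_reals all_analysis.
From mathcomp Require Import complex.
Set Implicit Arguments. Unset Strict Implicit. Unset Printing Implicit Defensive.
Import Order.TTheory GRing.Theory Num.Theory.
Import numFieldNormedType.Exports.
Local Open Scope ring_scope.
Local Open Scope classical_set_scope.

(* [ip] is an inner product on the complex normed space [V] inducing its
   norm: linear in the first argument, conjugate symmetric, and
   ||x||^2 = <x, x> (which gives positivity/definiteness). *)
Definition is_inner_product (R : realType) (V : normedModType R[i])
  (ip : V -> V -> R[i]) : Prop :=
  [/\ forall y, linear (ip ^~ y),
      forall x y, ip x y = (ip y x)^* &
      forall x, `|x| ^+ 2 = ip x x].

Definition is_Hilbert (R : realType) (V : completeNormedModType R[i])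
  (ip : V -> V -> R[i]) : Prop := is_inner_product ip.

Definition bounded_op (R : realType) (V : normedModType R[i]) (T : V -> V) :
  Prop := linear T /\ continuous T.

Definition is_adjoint (R : realType) (V : normedModType R[i])
  (ip : V -> V -> R[i]) (T Ts : V -> V) : Prop :=
  bounded_op Ts /\ forall x y, ip (T x) y = ip x (Ts y).

Definition closed_range (R : realType) (V : normedModType R[i]) (T : V -> V) :
  Prop := closed (range T).

Definition is_MP_inverse (R : realType) (V : normedModType R[i])
  (ip : V -> V -> R[i]) (T Td : V -> V) : Prop :=
  [/\ bounded_op Td,
      T \o Td \o T = T,
      Td \o T \o Td = Td,
      is_adjoint ip (Td \o T) (Td \o T) &
      is_adjoint ip (T \o Td) (T \o Td)].

Definition n_hypo_EP (R : realType) (V : normedModType R[i]) (n : nat)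
  (T Ts : V -> V) : Prop :=
  closed_range T /\ range (iter n T) `<=` range Ts.

From HB Require Import structures.
From mathcomp Require Import all_boot all_order all_algebra.
From mathcomp Require Import all_classical all_reals all_analysis.
From mathcomp Require Import complex.
Import Order.TTheory GRing.Theory Num.Theory.
Import numFieldNormedType.Exports.
Local Open Scope ring_scope.
Local Open Scope classical_set_scope.
Set Implicit Arguments. Unset Strict Implicit.

(* With P := T^dagger T, the orthogonal projection onto R(T^* ), every
   condition is a reformulation of  P T^n = T^n, or of its adjoint form
   (T^* )^n P = (T^* )^n.  Indeed R(T^n) lies in R(T^* ) iff P fixes it;
   T^n T^dagger T = T^n gives (3) <-> (2); and since T, omega(T) and P
   have the same kernel (P = T^* omega(T), omega(T) P = omega(T)), a
   bound of (T^* )^n by T or by omega(T) says exactly that (T^* )^n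
   vanishes on ker P, while conversely (T^* )^n = ((T^* )^n T^dagger) T
   = ((T^* )^(n+1)) omega(T) yields such bounds. *)

Section BoundedOperators.
Variables (R : realType) (V : normedModType R[i]).
Implicit Types f g h : V -> V.

Lemma linearB_fun f : linear f -> forall x y, f (x - y) = f x - f y.
Proof.
move=> lf; pose fL : {linear V -> V} := HB.pack f (GRing.isLinear.Build _ _ _ _ f lf).
exact: (linearB fL).
Qed.

Lemma bounded_op_normle f :
  bounded_op f -> exists c : R[i], 0 <= c /\ forall x, `|f x| <= c * `|x|.
Proof.
case=> lf cf.
pose fL : {linear V -> V} := HB.pack f (GRing.isLinear.Build _ _ _ _ f lf).
have /linear_boundedP/pinfty_ex_gt0[c c_gt0 fc] : bounded_near fL (nbhs 0).
  exact/linear_bounded_continuous.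
by exists c; split; [exact: ltW|].
Qed.

Lemma bounded_op_comp f g : bounded_op f -> bounded_op g -> bounded_op (f \o g).
Proof.
case=> lf cf [lg cg]; split; first by move=> a u v /=; rewrite lg lf.
by move=> x; apply: continuous_comp; [exact: cg | exact: cf].
Qed.

Lemma bounded_op_iter f k : bounded_op f -> bounded_op (iter k f).
Proof.
move=> bf; elim: k => [|k IHk]; last exact: bounded_op_comp.
by split; [move=> a u v | move=> x; exact: cvg_id].
Qed.

Lemma factor_dominated f g h :
  bounded_op h -> (forall x, f x = h (g x)) ->
  exists c : R[i], 0 <= c /\ forall x, `|f x| <= c * `|g x|.
Proof.
move=> /bounded_op_normle[c [c_ge0 hc]] fE.
by exists c; split=> // x; rewrite fE.
Qed.

Lemma dominated_congr f g (c : R[i]) u v :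
  linear f -> linear g -> (forall x, `|f x| <= c * `|g x|) ->
  g u = g v -> f u = f v.
Proof.
move=> lf lg fc guv; apply/eqP; rewrite -subr_eq0 -linearB_fun // -normr_le0.
by apply: le_trans (fc _) _; rewrite linearB_fun // guv subrr normr0 mulr0.
Qed.

End BoundedOperators.

Section InnerProduct.
Variables (R : realType) (V : normedModType R[i]) (ip : V -> V -> R[i]).
Implicit Types f g fs gs P : V -> V.

Lemma iter_adjoint f fs :
  (forall x y, ip (f x) y = ip x (fs y)) ->
  forall k x y, ip (iter k f x) y = ip x (iter k fs y).
Proof. by move=> adj; elim=> [//|k IHk] x y; rewrite iterSr IHk adj. Qed.

Hypothesis ip_inner : is_inner_product ip.

Lemma ipBl u v y : ip (u - v) y = ip u y - ip v y.
Proof.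
have [lin _ _] := ip_inner.
by have := lin y (-1) v u; rewrite /= !scaleN1r => ipNvu; rewrite addrC ipNvu addrC.
Qed.

Lemma ip_inj_l x z : (forall y, ip x y = ip z y) -> x = z.
Proof.
have [_ _ normE] := ip_inner; move=> xz; apply/eqP.
rewrite -subr_eq0 -normr_eq0.
by have := normE (x - z); rewrite ipBl xz subrr => /eqP; rewrite expf_eq0.
Qed.

Lemma ip_inj_r y z : (forall x, ip x y = ip x z) -> y = z.
Proof.
have [_ ipC _] := ip_inner; move=> yz.
by apply: ip_inj_l => x; rewrite ipC yz -ipC.
Qed.

Lemma adjoint_sym f fs :
  (forall x y, ip (f x) y = ip x (fs y)) ->
  forall x y, ip (fs x) y = ip x (f y).
Proof. by have [_ ipC _] := ip_inner; move=> adj x y; rewrite ipC -adj -ipC. Qed.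

Lemma adjoint_eq f g fs gs :
  (forall x y, ip (f x) y = ip x (fs y)) ->
  (forall x y, ip (g x) y = ip x (gs y)) ->
  (forall x, f x = g x) -> forall y, fs y = gs y.
Proof. by move=> adjf adjg fg y; apply: ip_inj_r => x; rewrite -adjf fg adjg. Qed.

Lemma adjoint_comp_fixed f fs P :
  (forall x y, ip (f x) y = ip x (fs y)) ->
  (forall x y, ip (P x) y = ip x (P y)) ->
  (forall x, P (f x) = f x) <-> (forall y, fs (P y) = fs y).
Proof.
move=> adjf adjP; split=> fixP.
- apply: (adjoint_eq (f := P \o f) _ adjf) => [x y | x] /=.
    by rewrite adjP adjf.
  by rewrite fixP.
- apply: (adjoint_eq (f := fs \o P) _ (adjoint_sym adjf)) => [x y | y] /=.
    by rewrite (adjoint_sym adjf) adjP.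
  by rewrite fixP.
Qed.

Section MoorePenrose.
Variables T Ts Td W : V -> V.
Hypotheses (adjT : forall x y, ip (T x) y = ip x (Ts y))
  (adjTd : forall x y, ip (Td x) y = ip x (W y))
  (TTdT : forall x, T (Td (T x)) = T x)
  (TdTTd : forall x, Td (T (Td x)) = Td x)
  (adjP : forall x y, ip (Td (T x)) y = ip x (Td (T y))).

Lemma MP_proj_adjoint y : Td (T (Ts y)) = Ts y.
Proof. by apply: ip_inj_r => x; rewrite -adjP -adjT TTdT adjT. Qed.

Lemma MP_proj_factor y : Td (T y) = Ts (W y).
Proof. by apply: ip_inj_r => x; rewrite -adjP adjTd adjT. Qed.

Lemma MP_dual_proj y : W (Td (T y)) = W y.
Proof.
rewrite MP_proj_factor; apply: ip_inj_r => x.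
by rewrite -adjTd -adjT -adjTd TdTTd adjTd.
Qed.

Lemma iter_MP_proj n x : (0 < n)%N -> iter n T (Td (T x)) = iter n T x.
Proof. by case: n => [//|n] _; rewrite !iterSr TTdT. Qed.

End MoorePenrose.
End InnerProduct.

Theorem mainTheorem13 (R : realType) (V : completeNormedModType R[i])
  (ip : V -> V -> R[i]) (T Ts Td W : V -> V) (n : nat) :
  is_Hilbert ip ->
  bounded_op T -> closed_range T -> (1 <= n)%N ->
  is_adjoint ip T Ts -> is_MP_inverse ip T Td -> is_adjoint ip Td W ->
  [<-> n_hypo_EP n T Ts;
       iter n T = Td \o iter n.+1 T;
       iter n T \o Td = Td \o iter n.+1 T \o Td;
       iter n Ts = iter n Ts \o Td \o T;
       exists c : R[i], 0 <= c /\ forall x, `|iter n Ts x| <= c * `|T x|;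
       exists c : R[i], 0 <= c /\ forall x, `|iter n Ts x| <= c * `|W x|].
Proof.
move=> hip bT clT n_gt0 [bTs adjT] [bTd TTdT TdTTd [_ adjP] _] [bW adjTd].
have {}TTdT x : T (Td (T x)) = T x by have := congr1 (fun f => f x) TTdT.
have {}TdTTd x : Td (T (Td x)) = Td x by have := congr1 (fun f => f x) TdTTd.
have bTsn := bounded_op_iter n bTs.
have fixE := adjoint_comp_fixed hip (iter_adjoint adjT n) adjP.
tfae.
- case=> _ sub; apply/funext => x /=.
  have [y _ <-] := sub _ (imageT (iter n T) x).
  by rewrite (MP_proj_adjoint hip adjT TTdT adjP).
- by move=> ->.
- move=> fixTnTd; apply/funext => y; apply/esym; move: y; apply/fixE => x.
  have := congr1 (fun f => f (T x)) fixTnTd => /=.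
  by rewrite !iter_MP_proj // => <-.
- move=> fixTsn; apply: (factor_dominated (bounded_op_comp bTsn bTd)) => x.
  by rewrite [LHS](congr1 (fun f => f x) fixTsn).
- case=> c [_ domT].
  apply: (factor_dominated (bounded_op_comp bTsn bTs)) => x /=.
  rewrite -(MP_proj_factor hip adjT adjTd adjP).
  exact: dominated_congr bTsn.1 bT.1 domT (esym (TTdT x)).
- case=> c [_ domW]; split=> // _ [x _ <-].
  have fixTsn y : iter n Ts (Td (T y)) = iter n Ts y.
    apply: dominated_congr bTsn.1 bW.1 domW _.
    by have := MP_dual_proj hip adjT adjTd TdTTd adjP y.
  rewrite -(proj2 fixE fixTsn) /= (MP_proj_factor hip adjT adjTd adjP).
  exact: imageT.
Qed.
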